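(* Let $3\le w<n$. If there exists a Steiner system $S(3,w,n)$ such that every $S(2,w-1,n-1)$ system derived from it is resolvable, then $q'_0(3,w,n)=\frac{n-2}{w-2}+1$.
   Context: $\mathbb{Z}_q=\{0,\dots,q-1\}$ (an alphabet); $\mathrm{wt}$ = number of nonzero coordinates; $d$ = Hamming distance; $J_q(n,w)$ = weight-$w$ words of $\mathbb{Z}_q^n$. An $(n,w,d)_q$ code of size $M$ is a subset $C\subseteq J_q(n,w)$ with $|C|=M$ and pairwise distances at least $d$. A Steiner system $S(t,k,n)$ is a pair $(N,B)$, $|N|=n$, $B$ a set of $k$-subsets (blocks) of $N$ with every $t$-subset of $N$ in exactly one block. For a point $p\in N$ (when $t\ge2$), the derived system is $(N\setminus\{p\},\{\beta\setminus\{p\}: p\in\beta\in B\})$, an $S(t-1,k-1,n-1)$. A Steiner system $S(t,k,n)$ is resolvable if its block set can be partitioned into classes each of which is a partition of $N$. For $t,k,n$ such that an $S(t,k,n)$ exists, $q'_0(t,k,n)$ is the smallest $q$ for which an $(n,k,2k-t+1)_q$ code of size $\binom{n}{t}/\binom{k}{t}$ exists. *)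

From mathcomp Require Import all_boot.
Set Implicit Arguments. Unset Strict Implicit. Unset Printing Implicit Defensive.

Definition word (q n : nat) := {ffun 'I_n -> 'I_q}.

Definition wt (q n : nat) (x : word q n) : nat :=
  #|[set i : 'I_n | nat_of_ord (x i) != 0]|.

Definition hdist (q n : nat) (x y : word q n) : nat :=
  #|[set i : 'I_n | x i != y i]|.

Definition is_code (q n w d M : nat) (C : {set word q n}) : Prop :=
  [/\ forall x, x \in C -> wt x = w,
      forall x y, x \in C -> y \in C -> x != y -> (d <= hdist x y)%N
    & #|C| = M].

Definition code_exists (q n w d M : nat) : Prop :=
  exists C : {set word q n}, @is_code q n w d M C.

Definition steiner_system (t k n : nat) (B : {set {set 'I_n}}) : Prop :=
  (forall b, b \in B -> #|b| = k) /\
  (forall T : {set 'I_n}, #|T| = t -> #|[set b in B | T \subset b]| = 1).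

(* Blocks of the derived system at point p (on the point set [set~ p]). *)
Definition derived_blocks (n : nat) (B : {set {set 'I_n}}) (p : 'I_n)
  : {set {set 'I_n}} := [set b :\ p | b in [set b in B | p \in b]].

Definition resolvable (T : finType) (X : {set T}) (D : {set {set T}}) : Prop :=
  exists Cls : {set {set {set T}}},
    partition Cls D /\ (forall P, P \in Cls -> partition P X).

Definition is_q0' (t k n m : nat) : Prop :=
  code_exists m n k (2 * k - t + 1) ('C(n, t) %/ 'C(k, t)) /\
  (forall q, code_exists q n k (2 * k - t + 1) ('C(n, t) %/ 'C(k, t)) -> (m <= q)%N).

From mathcomp Require Import all_boot zify.
Set Implicit Arguments. Unset Strict Implicit. Unset Printing Implicit Defensive.

(* Lower bound: two words of an (n, w, 2w-2)_q code share at most two support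
   points, and differ at both when they share two.  Hence the supports form an
   S(3, w, n), and the (n-2)/(w-2) codewords whose support contains two fixed
   points carry pairwise distinct nonzero symbols at the first one.
   Upper bound: for i in a block b, give b the symbol 1 + (index of the parallel
   class of b \ {i} in a resolution of the system derived at i).  Each such
   resolution has at most (n-2)/(w-2) classes, and if two blocks meet in {i, j}
   then b1 \ {i} and b2 \ {i} meet in j, so they lie in different classes and
   the words differ at i and at j. *)

Lemma card_setId_sum (T : finType) (A : {set T}) (P : pred T) :
  #|[set x in A | P x]| = \sum_(x in A) P x.
Proof.
rewrite -sum1_card big_mkcond [RHS]big_mkcond /=; apply: eq_bigr => x _.
by rewrite inE; case: (x \in A); case: (P x).
Qed.

Lemma double_count_subset (T : finType) (F S : {set {set T}}) :
  \sum_(X in S) #|[set f in F | X \subset f]| =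
  \sum_(f in F) #|[set X in S | X \subset f]|.
Proof.
under eq_bigr do rewrite card_setId_sum.
by rewrite exchange_big /=; apply: eq_bigr => f _; rewrite card_setId_sum.
Qed.

Lemma sum_card_blocks_over_triples (n w : nat) (F : {set {set 'I_n}}) :
  (forall b, b \in F -> #|b| = w) ->
  \sum_(X in [set X : {set 'I_n} | #|X| == 3]) #|[set f in F | X \subset f]| =
  #|F| * 'C(w, 3).
Proof.
move=> Fw; rewrite double_count_subset -sum_nat_const; apply: eq_bigr => f fF.
by rewrite -(Fw f fF) -cards_draws; apply: eq_card => X; rewrite !inE andbC.
Qed.

Lemma steiner_of_packing (n w : nat) (F : {set {set 'I_n}}) :
  (forall b, b \in F -> #|b| = w) ->
  (forall X : {set 'I_n}, #|X| = 3 -> #|[set f in F | X \subset f]| <= 1) ->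
  #|F| * 'C(w, 3) = 'C(n, 3) -> @steiner_system 3 w n F.
Proof.
move=> Fw F_le1 F_card; split=> // X X3; apply/eqP; rewrite eqn_leq F_le1 //=.
rewrite lt0n; apply: contra_eqN F_card => /eqP X0; rewrite neq_ltn; apply/orP; left.
rewrite -sum_card_blocks_over_triples // -[X in 'C(X, 3)]card_ord -card_draws.
have X_triple : X \in [set Y : {set 'I_n} | #|Y| == 3] by rewrite inE X3.
rewrite -sum1_card (bigD1 X) //= [in X in _ < X](bigD1 X) //= X0 add0n add1n ltnS.
by apply: leq_sum => Y /andP[+ _]; rewrite inE => /eqP /F_le1.
Qed.

Lemma card_set3 n (a b c : 'I_n) :
  a != b -> c \notin [set a; b] -> #|[set a; b; c]| = 3.
Proof. by move=> ab cab; rewrite setUC cardsU1 cab cards2 ab. Qed.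

Lemma set3_inj n (a b : 'I_n) :
  {in ~: [set a; b] &, injective (fun c => [set a; b; c])}.
Proof.
move=> c1 c2; rewrite !inE => /norP[c1a c1b] _ E.
have : c1 \in [set a; b; c1] by rewrite !inE eqxx !orbT.
by rewrite E !inE (negbTE c1a) (negbTE c1b) /= => /eqP.
Qed.

Lemma subset_card3 (T : finType) (I : {set T}) :
  3 <= #|I| -> exists2 X : {set T}, X \subset I & #|X| = 3.
Proof.
move=> I3; have : 0 < #|[set X : {set T} | X \subset I & #|X| == 3]|.
  by rewrite cards_draws bin_gt0.
by case/card_gt0P => X; rewrite inE => /andP[XI /eqP X3]; exists X.
Qed.

Section SteinerTripleSystem.
Variables (n w : nat) (B : {set {set 'I_n}}).
Hypothesis SB : @steiner_system 3 w n B.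

Lemma steiner_card : #|B| * 'C(w, 3) = 'C(n, 3).
Proof.
case: SB => Bw B1; rewrite -sum_card_blocks_over_triples //.
rewrite -[X in 'C(X, 3)]card_ord -card_draws -sum1_card.
by apply: eq_bigr => X; rewrite inE => /eqP /B1.
Qed.

Lemma steiner_meet_le2 b1 b2 :
  b1 \in B -> b2 \in B -> b1 != b2 -> #|b1 :&: b2| <= 2.
Proof.
case: SB => _ B1 b1B b2B b12; rewrite leqNgt; apply/negP => /subset_card3[X XI X3].
have : [set b1; b2] \subset [set b in B | X \subset b].
  rewrite subUset !sub1set !inE b1B b2B.
  by rewrite (subset_trans XI (subsetIl _ _)) (subset_trans XI (subsetIr _ _)).
by move/subset_leq_card; rewrite cards2 b12 B1.
Qed.

(* Double count the triples [{a, b, c}]: each lies in one block, and each block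
   through [a] and [b] contains [w - 2] of them. *)
Lemma steiner_pair_degree a b : a != b ->
  #|[set c in B | (a \in c) && (b \in c)]| * (w - 2) = n - 2.
Proof.
case: SB => Bw B1 ab; pose S := (fun c => [set a; b; c]) @: ~: [set a; b].
have S_count : \sum_(X in S) #|[set f in B | X \subset f]| = n - 2.
  rewrite -[n in RHS]card_ord -(cardsC [set a; b]) cards2 ab addKn.
  rewrite -(card_in_imset (@set3_inj n a b)) -sum1_card.
  apply: eq_bigr => X /imsetP[c cS ->]; apply: B1.
  by apply: card_set3; rewrite // -in_setC.
rewrite -S_count double_count_subset card_setId_sum big_distrl /=.
apply: eq_bigr => f fB; have [/andP[af bf]|nab] := boolP ((a \in f) && (b \in f)).
  have ab_f : [set a; b] \subset f by rewrite subUset !sub1set af bf.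
  have -> : [set X in S | X \subset f] =
            (fun c => [set a; b; c]) @: (f :\: [set a; b]).
    apply/setP => X; rewrite inE; apply/andP/imsetP.
      case=> [/imsetP[c cS ->] sub]; exists c => //.
      by rewrite inE -in_setC cS (subsetP sub) // !inE eqxx ?orbT.
    case=> c; rewrite inE -in_setC => /andP[cS cf] ->; split; first exact: imset_f.
    by rewrite subUset ab_f sub1set.
  rewrite mul1n card_in_imset ?cardsDS // ?cards2 ?ab ?Bw //.
  by move=> x y /setDP[_ xn] /setDP[_ yn]; apply: set3_inj; rewrite inE.
rewrite mul0n; apply/esym/eqP; rewrite cards_eq0; apply/eqP/setP => X; rewrite !inE.
apply/negbTE/andP => -[/imsetP[c _ ->] sub]; case/negP: nab.
by rewrite !(subsetP sub) // !inE eqxx ?orbT.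
Qed.

Lemma steiner_pair_degreeE a b : 3 <= w -> a != b ->
  #|[set c in B | (a \in c) && (b \in c)]| = (n - 2) %/ (w - 2).
Proof. by move=> w3 ab; rewrite -(steiner_pair_degree ab) mulnK //; lia. Qed.

End SteinerTripleSystem.

Lemma mem_derived_blocks n (B : {set {set 'I_n}}) p b :
  b \in B -> p \in b -> b :\ p \in derived_blocks B p.
Proof. by move=> bB pb; apply/imsetP; exists b; rewrite // inE bB pb. Qed.

Lemma derived_degree_le n (B : {set {set 'I_n}}) p x :
  #|[set d in derived_blocks B p | x \in d]| <=
  #|[set c in B | (p \in c) && (x \in c)]|.
Proof.
apply: leq_trans (leq_imset_card (fun c => c :\ p) _); apply: subset_leq_card.
apply/subsetP => d; rewrite inE => /andP[/imsetP[c]].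
rewrite inE => /andP[cB pc] -> /setD1P[_ xc].
by apply: imset_f; rewrite !inE cB pc.
Qed.

Section Resolution.
Variables (T : finType) (X : {set T}) (D : {set {set T}}).
Variable Cls : {set {set {set T}}}.
Hypothesis Cls_partition : partition Cls D.
Hypothesis Cls_resolve : forall P, P \in Cls -> partition P X.

Definition class_index (d : {set T}) : nat := index (pblock Cls d) (enum Cls).

Let cover_Cls : cover Cls = D := cover_partition Cls_partition.

Lemma class_index_lt d : d \in D -> class_index d < #|Cls|.
Proof. by move=> dD; rewrite cardE index_mem mem_enum pblock_mem ?cover_Cls. Qed.

Lemma class_index_disjoint d1 d2 : d1 \in D -> d2 \in D -> d1 != d2 ->
  class_index d1 = class_index d2 -> [disjoint d1 & d2].
Proof.
move=> d1D d2D d12 same_index.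
have d1_class : pblock Cls d1 \in Cls by rewrite pblock_mem ?cover_Cls.
have same_class : pblock Cls d1 = pblock Cls d2.
  by apply: (index_inj set0 _ _ same_index); rewrite mem_enum pblock_mem ?cover_Cls.
have tP := partition_trivIset (Cls_resolve d1_class).
apply: (trivIsetP tP) => //; first by rewrite mem_pblock cover_Cls.
by rewrite same_class mem_pblock cover_Cls.
Qed.

(* Each parallel class has its own block through [x]. *)
Lemma card_classes_le_degree x : x \in X -> #|Cls| <= #|[set d in D | x \in d]|.
Proof.
move=> xX.
have x_cover P : P \in Cls -> x \in cover P by move/Cls_resolve/cover_partition->.
rewrite -(@card_in_imset _ _ (fun P => pblock P x)); last first.
  move=> P1 P2 P1C P2C same_block; apply/eqP/negPn/negP => P12.
  have := disjointFr (trivIsetP (partition_trivIset Cls_partition) _ _ P1C P2C P12).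
  by move/(_ _ (pblock_mem (x_cover _ P1C))); rewrite same_block pblock_mem ?x_cover.
apply/subset_leq_card/subsetP => _ /imsetP[P PC ->].
rewrite inE mem_pblock x_cover // andbT -cover_Cls.
by apply/bigcupP; exists P => //; rewrite pblock_mem ?x_cover.
Qed.

End Resolution.

Definition supp q n (x : word q n) : {set 'I_n} := [set i : 'I_n | nat_of_ord (x i) != 0].

Lemma card_nonzero_ord q : #|[set i : 'I_q | nat_of_ord i != 0]| = q.-1.
Proof.
case: q => [|q]; first by apply/eqP; rewrite cards_eq0; apply/eqP/setP => -[].
rewrite (_ : [set i | _] = [set~ ord0]) ?cardsC1 ?card_ord //.
by apply/setP => -[[|i] ?]; rewrite !inE.
Qed.

Definition agree q n (x y : word q n) : {set 'I_n} :=
  [set i in supp x :&: supp y | x i == y i].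

Lemma hdist_meet_agree q n (x y : word q n) :
  hdist x y + #|supp x :&: supp y| + #|agree x y| <= wt x + wt y.
Proof.
have agree_meet : agree x y \subset supp x :&: supp y.
  by apply/subsetP => i /setIdP[].
have diff_sub : [set i | x i != y i] \subset (supp x :|: supp y) :\: agree x y.
  apply/subsetP => i; rewrite !inE => xy_i; rewrite negb_and xy_i orbT /=.
  apply: contraR xy_i => /norP[/negPn/eqP x0 /negPn/eqP y0].
  by apply/eqP/val_inj; rewrite /= x0 y0.
have meet_x := subset_leq_card (subsetIl (supp x) (supp y)).
have agree_y := leq_trans (subset_leq_card agree_meet) (subset_leq_card (subsetIr _ _)).
have dist_le : hdist x y <= #|(supp x :|: supp y) :\: agree x y|.
  exact: subset_leq_card diff_sub.
rewrite cardsDS ?(subset_trans agree_meet) ?subIset ?subsetUl // cardsU in dist_le.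
rewrite -subnDA leq_subRL in dist_le; last exact: leq_add.
by rewrite -addnA addnC.
Qed.

Section CodeSupports.
Variables (q n w M : nat) (C : {set word q n}).
Hypothesis w_ge3 : 3 <= w.
Hypothesis C_code : @is_code q n w (2 * w - 3 + 1) M C.

Let wt_C x : x \in C -> #|supp x| = w.
Proof. by case: C_code => Cw _ _ /Cw. Qed.

Lemma code_meet_agree_le2 x y : x \in C -> y \in C -> x != y ->
  #|supp x :&: supp y| + #|agree x y| <= 2.
Proof.
move=> xC yC xy; case: C_code => Cw Cd _.
by have := hdist_meet_agree x y; have := Cd x y xC yC xy; rewrite !Cw //; lia.
Qed.

Lemma code_supp_inj : {in C &, injective (@supp q n)}.
Proof.
move=> x y xC yC same_supp; apply/eqP/negPn/negP => /(code_meet_agree_le2 xC yC).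
by rewrite same_supp setIid wt_C //; lia.
Qed.

Lemma code_disagree_meet2 x y a b : x \in C -> y \in C -> x != y -> a != b ->
  [set a; b] \subset supp x :&: supp y -> x a != y a.
Proof.
move=> xC yC xy ab ab_I; apply/negP => xy_a.
have := code_meet_agree_le2 xC yC xy; have := subset_leq_card ab_I.
have : 0 < #|agree x y|.
  by apply/card_gt0P; exists a; rewrite inE xy_a (subsetP ab_I) // !inE eqxx.
by rewrite cards2 ab; lia.
Qed.

Lemma steiner_code_supports : M * 'C(w, 3) = 'C(n, 3) ->
  @steiner_system 3 w n ((@supp q n) @: C).
Proof.
case: C_code => _ _ C_card M_card; apply: steiner_of_packing.
- by move=> _ /imsetP[x xC ->]; apply: wt_C.
- move=> X X3; apply/card_le1_eqP => f1 f2.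
  rewrite !inE => /andP[/imsetP[x xC ->] Xx] /andP[/imsetP[y yC ->] Xy].
  have [-> //|xy] := eqVneq x y; have := code_meet_agree_le2 xC yC xy.
  have : X \subset supp x :&: supp y by rewrite subsetI Xx Xy.
  by move/subset_leq_card; rewrite X3; lia.
- by rewrite card_in_imset ?C_card //; apply: code_supp_inj.
Qed.

End CodeSupports.

(* Fix two points [a], [b]: the [(n - 2) / (w - 2)] codewords whose support
   contains both take pairwise distinct nonzero values at [a]. *)
Lemma code_alphabet_lower_bound n w q B (C : {set word q n}) :
  3 <= w -> w < n -> @steiner_system 3 w n B ->
  @is_code q n w (2 * w - 3 + 1) ('C(n, 3) %/ 'C(w, 3)) C ->
  (n - 2) %/ (w - 2) + 1 <= q.
Proof.
move=> w3 wn SB C_code; have [_ _ C_card] := C_code.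
have M_card : 'C(n, 3) %/ 'C(w, 3) * 'C(w, 3) = 'C(n, 3).
  by rewrite -(steiner_card SB) mulnK // bin_gt0; lia.
have S_supp := steiner_code_supports w3 C_code M_card.
have n2 : 1 < n by lia.
pose a := Ordinal (ltnW n2); pose b := Ordinal n2.
pose G := [set x in C | (a \in supp x) && (b \in supp x)].
have G_card : #|G| = (n - 2) %/ (w - 2).
  rewrite -(steiner_pair_degreeE S_supp w3 (_ : a != b)) //.
  have -> : [set c in @supp q n @: C | (a \in c) && (b \in c)] = @supp q n @: G.
    apply/setP => f; rewrite inE; apply/andP/imsetP.
      by case=> [/imsetP[x xC ->] abx]; exists x; rewrite // inE xC.
    by case=> x /setIdP[xC abx] ->; rewrite imset_f.
  rewrite card_in_imset // => x y /setIdP[xC _] /setIdP[yC _].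
  exact: (code_supp_inj w3 C_code).
have : #|(fun x : word q n => x a) @: G| <= q.-1.
  rewrite -card_nonzero_ord; apply/subset_leq_card/subsetP => _ /imsetP[x + ->].
  by rewrite !inE => /and3P[_ ax _].
rewrite card_in_imset ?G_card; last first.
  move=> x y /setIdP[xC /andP[ax bx]] /setIdP[yC /andP[ay by']] xy_a.
  apply/eqP; apply: contraTT (introT eqP xy_a) => xy.
  by apply: (code_disagree_meet2 w3 C_code xC yC xy (_ : a != b));
    rewrite // subsetI !subUset !sub1set ax bx ay by'.
have : 0 < (n - 2) %/ (w - 2) by rewrite divn_gt0; lia.
lia.
Qed.

Section ResolutionCode.
Variables (n w : nat) (B : {set {set 'I_n}}).
Variable Cls : 'I_n -> {set {set {set 'I_n}}}.
Hypothesis w_ge3 : 3 <= w.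
Hypothesis SB : @steiner_system 3 w n B.
Hypothesis Cls_resolution : forall p,
  partition (Cls p) (derived_blocks B p) /\
  forall P, P \in Cls p -> partition P [set~ p].

Local Notation lam := ((n - 2) %/ (w - 2)).

Let Bw b : b \in B -> #|b| = w. Proof. by case: SB => Bw _ /Bw. Qed.

Lemma class_index_lt_lam b i : b \in B -> i \in b -> class_index (Cls i) (b :\ i) < lam.
Proof.
move=> bB ib; have [Cls_part Cls_res] := Cls_resolution i.
have : 0 < #|b :\ i| by have := cardsD1 i b; rewrite ib Bw //; lia.
case/card_gt0P => x /setD1P[xi xb].
apply: leq_trans (class_index_lt Cls_part (mem_derived_blocks bB ib)) _.
apply: leq_trans (card_classes_le_degree Cls_part Cls_res (_ : x \in [set~ i])) _.
  by rewrite !inE.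
apply: leq_trans (derived_degree_le B i x) _.
by rewrite (steiner_pair_degreeE SB) // eq_sym.
Qed.

(* Coordinate [i] of the word of block [b] names the parallel class of [b :\ i]
   in the resolution of the system derived at [i], shifted past the symbol 0. *)
Definition block_word (b : {set 'I_n}) : word lam.+1 n :=
  [ffun i => if i \in b then inord (class_index (Cls i) (b :\ i)).+1 else ord0].

Lemma block_wordE b i : b \in B ->
  nat_of_ord (block_word b i) = if i \in b then (class_index (Cls i) (b :\ i)).+1 else 0.
Proof.
by move=> bB; rewrite ffunE; case: ifP => // ib; rewrite inordK // ltnS class_index_lt_lam.
Qed.

Lemma supp_block_word b : b \in B -> supp (block_word b) = b.
Proof. by move=> bB; apply/setP => i; rewrite inE block_wordE //; case: ifP. Qed.

Lemma block_word_neq_out b1 b2 i : b1 \in B -> b2 \in B ->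
  i \in b1 -> i \notin b2 -> block_word b1 i != block_word b2 i.
Proof.
move=> b1B b2B ib1 ib2; apply: contraTneq isT => /(congr1 val) /=.
by rewrite !block_wordE // ib1 (negbTE ib2).
Qed.

(* [b1 :\ i] and [b2 :\ i] share [j], so they lie in different parallel classes. *)
Lemma block_word_neq_meet b1 b2 i j : b1 \in B -> b2 \in B -> b1 != b2 -> j != i ->
  [set i; j] \subset b1 :&: b2 -> block_word b1 i != block_word b2 i.
Proof.
move=> b1B b2B b12 ji; rewrite subsetI !subUset !sub1set => /andP[/andP[ib1 jb1] /andP[ib2 jb2]].
have [Cls_part Cls_res] := Cls_resolution i.
apply: contraTneq isT => /(congr1 val) /=; rewrite !block_wordE // ib1 ib2 => -[same_class].
have b12_i : b1 :\ i != b2 :\ i.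
  by apply: contraNneq b12 => eq_i; rewrite -(setD1K ib1) -(setD1K ib2) eq_i.
have := class_index_disjoint Cls_part Cls_res (mem_derived_blocks b1B ib1)
  (mem_derived_blocks b2B ib2) b12_i same_class.
by move/disjointFr => /(_ j); rewrite !inE ji jb1 jb2 => /(_ isT).
Qed.

Lemma hdist_block_word b1 b2 : b1 \in B -> b2 \in B -> b1 != b2 ->
  2 * w - 3 + 1 <= hdist (block_word b1) (block_word b2).
Proof.
move=> b1B b2B b12; have meet_le2 := steiner_meet_le2 SB b1B b2B b12.
have U_card : #|b1 :|: b2| = w + w - #|b1 :&: b2| by rewrite cardsU (Bw b1B) (Bw b2B).
have meet_le_w : #|b1 :&: b2| <= w by rewrite -(Bw b1B) subset_leq_card ?subsetIl.
have diff_sym i : i \in b1 :|: b2 -> i \notin b1 :&: b2 ->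
    block_word b1 i != block_word b2 i.
  rewrite !inE negb_and; case: (boolP (i \in b1)); case: (boolP (i \in b2)) => //= ib2 ib1 _ _.
    exact: block_word_neq_out.
  by rewrite eq_sym block_word_neq_out.
have [meet_lt2|meet_ge2] := ltnP #|b1 :&: b2| 2.
  have : #|(b1 :|: b2) :\: (b1 :&: b2)| <= hdist (block_word b1) (block_word b2).
    by apply/subset_leq_card/subsetP => i /setDP[iU iI]; rewrite inE diff_sym.
  rewrite cardsDS ?U_card ?subIset ?subsetUl //; lia.
have meet2 : #|b1 :&: b2| = 2 by apply/eqP; rewrite eqn_leq meet_le2.
have : #|b1 :|: b2| <= hdist (block_word b1) (block_word b2).
  apply/subset_leq_card/subsetP => i iU; rewrite inE.
  have [iI|] := boolP (i \in b1 :&: b2); last exact: diff_sym.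
  have : 0 < #|(b1 :&: b2) :\ i| by have := cardsD1 i (b1 :&: b2); rewrite iI meet2; lia.
  case/card_gt0P => j /setD1P[ji jI]; apply: (block_word_neq_meet b1B b2B b12 ji).
  by rewrite subUset !sub1set iI jI.
rewrite U_card; lia.
Qed.

Lemma resolution_code_exists :
  code_exists lam.+1 n w (2 * w - 3 + 1) ('C(n, 3) %/ 'C(w, 3)).
Proof.
have block_word_inj : {in B &, injective block_word}.
  by move=> b1 b2 b1B b2B eq12; rewrite -(supp_block_word b1B) eq12 supp_block_word.
exists (block_word @: B); split.
- by move=> _ /imsetP[b bB ->]; rewrite /wt -/(supp _) supp_block_word ?Bw.
- move=> _ _ /imsetP[b1 b1B ->] /imsetP[b2 b2B ->] neq12.
  by apply: hdist_block_word => //; apply: contraNneq neq12 => ->.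
- by rewrite card_in_imset // -(steiner_card SB) mulnK // bin_gt0.
Qed.

End ResolutionCode.

Theorem mainTheorem10 (n w : nat) :
  (3 <= w)%N -> (w < n)%N ->
  (exists B : {set {set 'I_n}},
      @steiner_system 3 w n B /\
      forall p : 'I_n, resolvable [set~ p] (derived_blocks B p)) ->
  is_q0' 3 w n ((n - 2) %/ (w - 2) + 1).
Proof.
move=> w3 wn [B [SB B_res]].
have [Cls Cls_resolution] := fin_all_exists B_res.
split; first by rewrite addn1; exact: resolution_code_exists w3 SB Cls_resolution.
by move=> q [C C_code]; exact: code_alphabet_lower_bound w3 wn SB C_code.
Qed.
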